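(* Let $\Phi \in \mathbb{R}^{M \times N}$, let $\Lambda \subset \{1, 2, \dots, N\}$, and let $\widetilde{x} \in \mathbb{R}^N$ with $\mathrm{supp}(\widetilde{x}) \cap \Lambda = \emptyset$. Suppose $\Phi$ satisfies the restricted isometry property of order $\|\widetilde{x}\|_0 + |\Lambda| + 1$ with isometry constant $\delta$, and define $h = A_\Lambda^T A_\Lambda \widetilde{x}$. If $$\|\widetilde{x}\|_\infty > \frac{2\delta}{1-\delta}\|\widetilde{x}\|_2,$$ then $\arg\max_j |h(j)| \in \mathrm{supp}(\widetilde{x})$, i.e. every index $j$ maximizing $|h(j)|$ belongs to $\mathrm{supp}(\widetilde{x})$.
   Context: For $x \in \mathbb{R}^N$, $\|x\|_0 := |\mathrm{supp}(x)|$. A matrix $\Phi \in \mathbb{R}^{M\times N}$ satisfies the restricted isometry property (RIP) of order $K$ with isometry constant $\delta \in (0,1)$ if $(1-\delta)\|x\|_2^2 \le \|\Phi x\|_2^2 \le (1+\delta)\|x\|_2^2$ for all $x \in \mathbb{R}^N$ with $\|x\|_0 \le K$. For $\Lambda \subset \{1,\dots,N\}$, $\Phi_\Lambda$ is the submatrix of $\Phi$ consisting of the columns indexed by $\Lambda$, $P_\Lambda$ is the orthogonal projection onto the column space of $\Phi_\Lambda$, $P_\Lambda^\perp = I - P_\Lambda$, and $A_\Lambda := P_\Lambda^\perp \Phi$. *)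

From HB Require Import structures.
From mathcomp Require Import all_boot all_order all_algebra.
Set Implicit Arguments. Unset Strict Implicit. Unset Printing Implicit Defensive.
Import Order.TTheory GRing.Theory Num.Theory.
Local Open Scope ring_scope.

Section Defs.
Variable R : rcfType.

Definition supp N (x : 'cV[R]_N) : {set 'I_N} := [set i | x i 0 != 0].

Definition sqnorm2 n (v : 'cV[R]_n) : R := \sum_(i < n) (v i 0) ^+ 2.
Definition norm2 n (v : 'cV[R]_n) : R := Num.sqrt (sqnorm2 v).
Definition norminf n (v : 'cV[R]_n) : R := \big[Num.max/0]_(i < n) `|v i 0|.

Definition RIP M N (Phi : 'M[R]_(M, N)) (K : nat) (delta : R) : Prop :=
  0 < delta < 1 /\
  forall x : 'cV[R]_N, (#|supp x| <= K)%N ->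
    (1 - delta) * sqnorm2 x <= sqnorm2 (Phi *m x) /\
    sqnorm2 (Phi *m x) <= (1 + delta) * sqnorm2 x.

(* Phi_Lambda: the columns indexed by Lambda (other columns zeroed out;
   this has the same column space as the genuine submatrix) *)
Definition colrestr M N (Phi : 'M[R]_(M, N)) (L : {set 'I_N}) : 'M[R]_(M, N) :=
  \matrix_(i, j) (if j \in L then Phi i j else 0).

Definition is_orth_proj M N (P : 'M[R]_M) (B : 'M[R]_(M, N)) : Prop :=
  forall y : 'cV[R]_M,
    ((P *m y)^T <= B^T)%MS /\ B^T *m (y - P *m y) = 0.

(* A_Lambda = P_Lambda^perp Phi, for P = P_Lambda *)
Definition A_of M N (P : 'M[R]_M) (Phi : 'M[R]_(M, N)) : 'M[R]_(M, N) :=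
  (1%:M - P) *m Phi.
End Defs.

(** The matrix A = (I - P) Phi kills the columns indexed by Lambda, and on
    vectors supported off Lambda it inherits the RIP of Phi: the upper bound
    because I - P is a contraction, the lower bound because A z = Phi (z - r)
    for some r supported on Lambda, and removing the Lambda-part of z - r only
    shrinks its norm.  Polarizing the resulting near-isometry with the vectors
    x +- |x|_2 e_k gives |h(k) - x(k)| <= delta |x|_2 for every k.  Hence
    |h(j)| <= delta |x|_2 off the support, while at a coordinate i with
    |x(i)| > 2 delta |x|_2 we get |h(i)| > delta |x|_2. *)
From HB Require Import structures.
From mathcomp Require Import all_boot all_order all_algebra.
From mathcomp Require Import ring lra zify.
Import Order.TTheory GRing.Theory Num.Theory.
Local Open Scope ring_scope.

Set Implicit Arguments. Unset Strict Implicit.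

Section Euclidean.
Variable R : rcfType.

Definition dotcv n (u v : 'cV[R]_n) : R := \sum_(i < n) u i 0 * v i 0.

Lemma dotcvC n (u v : 'cV[R]_n) : dotcv u v = dotcv v u.
Proof. by apply: eq_bigr => i _; rewrite mulrC. Qed.

Lemma dotcv0 n (u : 'cV[R]_n) : dotcv u 0 = 0.
Proof. by rewrite /dotcv big1 // => i _; rewrite mxE mulr0. Qed.

Lemma dotcv_mulmxl m n (A : 'M[R]_(m, n)) u v :
  dotcv (A *m u) v = dotcv u (A^T *m v).
Proof.
rewrite /dotcv; under eq_bigr do rewrite mxE big_distrl /=.
rewrite exchange_big /=; apply: eq_bigr => k _.
by rewrite mxE big_distrr /=; apply: eq_bigr => i _; rewrite !mxE; ring.
Qed.

Lemma dotcv_delta_mx n (k : 'I_n) v : dotcv (delta_mx k 0) v = v k 0.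
Proof.
rewrite /dotcv (bigD1 k) //= big1 ?addr0; first by rewrite mxE !eqxx mul1r.
by move=> i /negbTE ik; rewrite mxE ik mul0r.
Qed.

Lemma sqnorm2_dotcv n (v : 'cV[R]_n) : sqnorm2 v = dotcv v v.
Proof. by apply: eq_bigr => i _; rewrite expr2. Qed.

Lemma sqnorm2_delta_mx n (k : 'I_n) : sqnorm2 (delta_mx k 0 : 'cV[R]_n) = 1.
Proof. by rewrite sqnorm2_dotcv dotcv_delta_mx mxE !eqxx. Qed.

Lemma sqnorm2_ge0 n (v : 'cV[R]_n) : 0 <= sqnorm2 v.
Proof. by apply: sumr_ge0 => i _; apply: sqr_ge0. Qed.

Lemma sqnorm2_eq0 n (v : 'cV[R]_n) : sqnorm2 v = 0 -> v = 0.
Proof.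
move=> v0; apply/matrixP => i j; rewrite (ord1 j) mxE.
have /psumr_eq0P vi0 : \sum_(i < n) v i 0 ^+ 2 = 0 by [].
by apply/eqP; rewrite -sqrf_eq0; apply/eqP/vi0 => // k _; apply: sqr_ge0.
Qed.

Lemma sqr_norm2 n (v : 'cV[R]_n) : norm2 v ^+ 2 = sqnorm2 v.
Proof. by rewrite sqr_sqrtr // sqnorm2_ge0. Qed.

Lemma sqnorm2DZ n (u v : 'cV[R]_n) t :
  sqnorm2 (u + t *: v) = sqnorm2 u + 2 * t * dotcv u v + t ^+ 2 * sqnorm2 v.
Proof.
rewrite /sqnorm2 /dotcv !mulr_sumr -!big_split /=.
by apply: eq_bigr => i _; rewrite !mxE; ring.
Qed.

Lemma norminf_gtP n (v : 'cV[R]_n) b :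
  0 <= b -> b < norminf v -> exists i, b < `|v i 0|.
Proof.
move=> b0; have [/existsP//|/existsPn vb] := boolP [exists i, b < `|v i 0|].
rewrite ltNge => /negP[].
apply: (big_ind (fun y => y <= b)) => // [x y xb yb|i _].
  by rewrite ge_max xb yb.
by rewrite leNgt vb.
Qed.

(* Polarization: compare the bounds at t = |u|_2 and t = - |u|_2. *)
Lemma dotcv_near_isometry m n (A : 'M[R]_(m, n)) (u v : 'cV[R]_n) delta :
  sqnorm2 v = 1 ->
  (forall t, `|sqnorm2 (A *m (u + t *: v)) - sqnorm2 (u + t *: v)|
               <= delta * sqnorm2 (u + t *: v)) ->
  `|dotcv (A *m u) (A *m v) - dotcv u v| <= delta * norm2 u.
Proof.
move=> v1 near; set s := norm2 u.
have [s0 | s_gt0] := eqVneq s 0.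
  have u0 : u = 0 by apply: sqnorm2_eq0; rewrite -sqr_norm2 -/s s0 expr0n.
  rewrite s0 mulr0 u0 mulmx0 dotcvC dotcv0 [dotcv 0 _]dotcvC dotcv0.
  by rewrite subrr normr0.
have {}s_gt0 : 0 < s by rewrite lt_def s_gt0 sqrtr_ge0.
have := near s; have := near (- s).
rewrite !mulmxDr -!scalemxAr !sqnorm2DZ v1 sqrrN -[sqnorm2 u]sqr_norm2 -/s.
rewrite !ler_norml => /andP[lo1 up1] /andP[lo2 up2].
apply/andP; split; rewrite -(ler_pM2l s_gt0); nra.
Qed.

End Euclidean.

Section OrthogonalProjection.
Variables (R : rcfType) (M N : nat) (B : 'M[R]_(M, N)) (P : 'M[R]_M).
Hypothesis projP : is_orth_proj P B.

Lemma proj_colspace y : exists c : 'cV[R]_N, P *m y = B *m c.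
Proof.
have /submxP[D PyD] := (projP y).1.
by exists D^T; rewrite -[P *m y]trmxK PyD trmx_mul trmxK.
Qed.

Lemma dotcv_colspace_perp (c : 'cV[R]_N) y : dotcv (B *m c) (y - P *m y) = 0.
Proof. by rewrite dotcv_mulmxl (projP y).2 dotcv0. Qed.

Lemma sqnorm2_proj_perp_le y : sqnorm2 (y - P *m y) <= sqnorm2 y.
Proof.
have [c Py] := proj_colspace y.
have decomp : y = (y - P *m y) + 1 *: (P *m y) by rewrite scale1r subrK.
have perp : dotcv (y - P *m y) (P *m y) = 0.
  by rewrite dotcvC {1}Py dotcv_colspace_perp.
rewrite [in X in _ <= X]decomp sqnorm2DZ perp.
by rewrite mulr0 addr0 expr1n mul1r lerDl sqnorm2_ge0.
Qed.

Lemma proj_perp_colspace (c : 'cV[R]_N) : B *m c - P *m (B *m c) = 0.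
Proof.
have [c' Py] := proj_colspace (B *m c).
apply: sqnorm2_eq0; rewrite sqnorm2_dotcv {1}Py -mulmxBr.
exact: dotcv_colspace_perp.
Qed.

End OrthogonalProjection.

Section ProjectedRIP.
Variables (R : rcfType) (M N : nat) (Phi : 'M[R]_(M, N)).
Variables (Lambda : {set 'I_N}) (P : 'M[R]_M) (K : nat) (delta : R).
Hypothesis projP : is_orth_proj P (colrestr Phi Lambda).
Hypothesis ripPhi : RIP Phi K delta.

Local Notation A := (A_of P Phi).

Definition restrv (c : 'cV[R]_N) : 'cV[R]_N :=
  \col_i (if i \in Lambda then c i 0 else 0).

Lemma colrestr_mulmx (c : 'cV[R]_N) :
  colrestr Phi Lambda *m c = Phi *m restrv c.
Proof.
apply/matrixP => i k; rewrite (ord1 k) !mxE; apply: eq_bigr => l _.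
by rewrite !mxE; case: (l \in Lambda); rewrite ?mul0r ?mulr0.
Qed.

Lemma A_of_mulmx p (z : 'M[R]_(N, p)) : A *m z = Phi *m z - P *m (Phi *m z).
Proof. by rewrite /A_of -mulmxA mulmxBl mul1mx. Qed.

Lemma A_of_delta_mx k : k \in Lambda -> A *m (delta_mx k 0 : 'cV[R]_N) = 0.
Proof.
move=> kL; have restrv_e : restrv (delta_mx k 0) = delta_mx k 0.
  apply/matrixP => i j; rewrite (ord1 j) !mxE.
  by case: (eqVneq i k) => [->|_]; rewrite ?kL //=; case: ifP.
by rewrite A_of_mulmx -restrv_e -colrestr_mulmx proj_perp_colspace.
Qed.

Lemma supp_disjoint_eq0 (z : 'cV[R]_N) i :
  supp z :&: Lambda = set0 -> i \in Lambda -> z i 0 = 0.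
Proof.
move=> zL iL; apply/eqP/negPn/negP => zi.
by have := in_set0 i; rewrite -zL inE [_ \in supp z]inE zi iL.
Qed.

Lemma sqnorm2_le_sub_restrv (z c : 'cV[R]_N) :
  supp z :&: Lambda = set0 -> sqnorm2 z <= sqnorm2 (z - restrv c).
Proof.
move=> zL; apply: ler_sum => i _; rewrite !mxE.
by case: ifP => [/(supp_disjoint_eq0 zL) ->|_]; rewrite ?subr0 ?expr0n ?sqr_ge0.
Qed.

Lemma A_of_RIP_lower (z : 'cV[R]_N) :
  supp z :&: Lambda = set0 -> (#|supp z| + #|Lambda| <= K)%N ->
  (1 - delta) * sqnorm2 z <= sqnorm2 (A *m z).
Proof.
move=> zL zK; have [/andP[_ d1] rip] := ripPhi.
have [c Pc] := proj_colspace projP (Phi *m z).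
have Az : A *m z = Phi *m (z - restrv c).
  by rewrite A_of_mulmx Pc colrestr_mulmx mulmxBr.
have suppK : (#|supp (z - restrv c)| <= K)%N.
  have cardU : #|supp z :|: Lambda| = (#|supp z| + #|Lambda|)%N.
    by rewrite cardsU zL cards0 subn0.
  rewrite -cardU in zK; apply: leq_trans zK; apply: subset_leq_card.
  apply/subsetP => i.
  by rewrite !inE !mxE; case: (i \in Lambda); rewrite ?orbT ?subr0 ?orbF.
rewrite Az; apply: le_trans (rip _ suppK).1.
by apply: ler_wpM2l; [rewrite subr_ge0 ltW | exact: sqnorm2_le_sub_restrv].
Qed.

Lemma A_of_RIP_upper (z : 'cV[R]_N) :
  (#|supp z| <= K)%N -> sqnorm2 (A *m z) <= (1 + delta) * sqnorm2 z.
Proof.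
move=> zK; rewrite A_of_mulmx.
exact: le_trans (sqnorm2_proj_perp_le projP _) (ripPhi.2 _ zK).2.
Qed.

Lemma A_of_near_isometry (z : 'cV[R]_N) :
  supp z :&: Lambda = set0 -> (#|supp z| + #|Lambda| <= K)%N ->
  `|sqnorm2 (A *m z) - sqnorm2 z| <= delta * sqnorm2 z.
Proof.
move=> zL zK; have lo := A_of_RIP_lower zL zK.
have up := A_of_RIP_upper (leq_trans (leq_addr _ _) zK).
rewrite ler_norml; apply/andP; split; lra.
Qed.

Lemma gram_A_of_coord (x : 'cV[R]_N) k :
  supp x :&: Lambda = set0 -> (#|supp x| + #|Lambda| + 1 <= K)%N ->
  `|(A^T *m A *m x) k 0 - x k 0| <= delta * norm2 x.
Proof.
move=> xL xK; have d0 : 0 <= delta by case: ripPhi => /andP[/ltW].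
set e := (delta_mx k 0 : 'cV[R]_N).
have -> : (A^T *m A *m x) k 0 = dotcv (A *m e) (A *m x).
  by rewrite dotcv_mulmxl dotcv_delta_mx mulmxA.
have [kL|kL] := boolP (k \in Lambda).
  rewrite A_of_delta_mx // dotcvC dotcv0 supp_disjoint_eq0 // subr0 normr0.
  by rewrite mulr_ge0 ?sqrtr_ge0.
rewrite -(dotcv_delta_mx k x) -/e (dotcvC (A *m e)) (dotcvC e).
apply: dotcv_near_isometry; first exact: sqnorm2_delta_mx.
move=> t; have supp_xte : supp (x + t *: e) \subset supp x :|: [set k].
  apply/subsetP => l; rewrite !inE !mxE.
  by case: (eqVneq l k) => [->|]; rewrite ?orbT //= mulr0 addr0 orbF.
apply: A_of_near_isometry.
  apply/eqP; rewrite -subset0; apply: subset_trans (setSI _ supp_xte) _.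
  rewrite setIUl xL set0U; apply/subsetP => l.
  by rewrite !inE => /andP[/eqP-> kL']; rewrite kL' in kL.
apply: leq_trans xK; have := subset_leq_card supp_xte.
by rewrite cardsU cards1; lia.
Qed.

End ProjectedRIP.

Theorem corollary1 (R : rcfType) (M N : nat) (Phi : 'M[R]_(M, N))
  (Lambda : {set 'I_N}) (xt : 'cV[R]_N) (delta : R)
  (P : 'M[R]_M) :
  supp xt :&: Lambda = set0 ->
  RIP Phi (#|supp xt| + #|Lambda| + 1)%N delta ->
  is_orth_proj P (colrestr Phi Lambda) ->
  let h := (A_of P Phi)^T *m A_of P Phi *m xt in
  norminf xt > (2 * delta) / (1 - delta) * norm2 xt ->
  forall j : 'I_N, (forall k : 'I_N, `|h k 0| <= `|h j 0|) -> j \in supp xt.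
Proof.
move=> xL rip projP h big_coord j j_max.
have [/andP[d0 d1] _] := rip.
have h_near k : `|h k 0 - xt k 0| <= delta * norm2 xt.
  exact: gram_A_of_coord projP rip _ _ xL (leqnn _).
have s0 : 0 <= 2 * delta * norm2 xt by rewrite !mulr_ge0 ?sqrtr_ge0 ?ltW.
have [i xi_big] : exists i, 2 * delta * norm2 xt < `|xt i 0|.
  apply: norminf_gtP s0 (le_lt_trans _ big_coord).
  by rewrite ler_wpM2r ?sqrtr_ge0 // ler_pdivlMr ?subr_gt0 //; nra.
apply: contraT; rewrite inE negbK => /eqP xj0.
have := h_near j; rewrite xj0 subr0 => hj_small.
have := h_near i; rewrite distrC => hi_near.
have := ler_normD (h i 0) (xt i 0 - h i 0); rewrite addrC subrK.
have := j_max i; lra.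
Qed.
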